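(* Let $R$ be an associative ring with identity which is left quasi-morphic. Then $R$ is left uniquely generated if and only if $R$ has stable range one.
   Context: For $a \in R$, $\operatorname{ann}_l(a) = \{r \in R : ra = 0\}$. $R$ is left quasi-morphic if the set of principal left ideals $\{Ra : a \in R\}$ coincides with the set of left annihilators $\{\operatorname{ann}_l(b) : b \in R\}$. $R$ is left uniquely generated if for all $a, b \in R$ with $Ra = Rb$ there exists a unit $u$ of $R$ with $a = ub$. $R$ has stable range one if whenever $a, b, x \in R$ satisfy $ax + b = 1$, there exists $y \in R$ such that $a + by$ is a unit of $R$. *)

From mathcomp Require Import all_boot all_algebra.
Set Implicit Arguments. Unset Strict Implicit. Unset Printing Implicit Defensive.
Import GRing.Theory.
Local Open Scope ring_scope.

Definition lprinc (R : unitRingType) (a : R) : R -> Prop :=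
  fun x => exists r : R, x = r * a.

Definition ann_l (R : unitRingType) (b : R) : R -> Prop :=
  fun r => r * b = 0.

Definition same_set (R : Type) (P Q : R -> Prop) : Prop :=
  forall x, P x <-> Q x.

Definition left_quasi_morphic (R : unitRingType) : Prop :=
  (forall a : R, exists b : R, same_set (lprinc a) (ann_l b)) /\
  (forall b : R, exists a : R, same_set (ann_l b) (lprinc a)).

Definition left_uniquely_generated (R : unitRingType) : Prop :=
  forall a b : R, same_set (lprinc a) (lprinc b) ->
    exists u : R, u \is a GRing.unit /\ a = u * b.

Definition stable_range_one (R : unitRingType) : Prop :=
  forall a b x : R, a * x + b = 1 ->
    exists y : R, (a + b * y) \is a GRing.unit.

From mathcomp Require Import all_boot all_algebra.
Set Implicit Arguments. Unset Strict Implicit.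
Import GRing.Theory.
Local Open Scope ring_scope.

(* Stable range one is left-right symmetric (Vaserstein): [a + (1 - a x) y] and
   [a + y (1 - x a)] are units together, the inverse of one being built from the
   inverse of the other.  Left stable range one then turns [a = s b], [b = t a]
   into [a = u b] with the unit [u = s + y (1 - t s)].  Conversely, if [R b] is a
   left annihilator [ann_l c] and [x a + b = 1], then [R (a c) = R c], so unique
   generation gives a unit [u] with [a c = u c]; hence [a - u] lies in
   [ann_l c = R b], i.e. [u = a + y b] for some [y]. *)

Definition left_stable_range_one (R : unitRingType) : Prop :=
  forall a b x : R, x * a + b = 1 -> exists y : R, (a + y * b) \is a GRing.unit.

Section StableRangeSymmetry.
Variable R : unitRingType.
Implicit Types a x y p q : R.

Lemma subr1M_comm p q : (1 - p * q) * p = p * (1 - q * p).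
Proof. by rewrite mulrBl mulrBr mul1r mulr1 mulrA. Qed.

Lemma addr_subr1Ml a x y : a + (1 - a * x) * y = y + a * (1 - x * y).
Proof. by rewrite mulrBl mulrBr mul1r mulr1 !mulrA addrA addrA (addrC a y). Qed.

Lemma addr_subr1Mr a x y : a + y * (1 - x * a) = y + (1 - y * x) * a.
Proof. by rewrite addr_subr1Ml. Qed.

Lemma unit_addr_subr1Ml a x y :
  a + y * (1 - x * a) \is a GRing.unit -> a + (1 - a * x) * y \is a GRing.unit.
Proof.
set v := a + y * (1 - x * a); set w := a + (1 - a * x) * y => v_unit.
have w_right : w * (1 - x * a) = (1 - a * x) * v.
  by rewrite /w /v mulrDl [RHS]mulrDr subr1M_comm mulrA.
have w_left : (1 - y * x) * w = v * (1 - x * y).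
  rewrite /w /v addr_subr1Ml (addr_subr1Mr a) mulrDr [RHS]mulrDl.
  by rewrite subr1M_comm mulrA.
have w_mulr : w * x + (1 - a * x) * (1 - y * x) = 1.
  by rewrite /w mulrDl -mulrA -addrA -mulrDr subrKC mulr1 subrKC.
have w_mull : x * w + (1 - x * a) * (1 - x * y) = 1.
  by rewrite /w addr_subr1Ml mulrDr mulrA -addrA -mulrDl subrKC mul1r subrKC.
apply/unitrP; exists (x + (1 - x * a) * v^-1 * (1 - y * x)); split.
- by rewrite mulrDl -!mulrA w_left (mulKr v_unit) w_mull.
- by rewrite mulrDr !mulrA w_right -(mulrA _ v) (mulrV v_unit) mulr1 w_mulr.
Qed.

Lemma unit_addr_subr1Mr a x y :
  a + (1 - a * x) * y \is a GRing.unit -> a + y * (1 - x * a) \is a GRing.unit.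
Proof. by rewrite addr_subr1Ml (addr_subr1Mr a); apply: unit_addr_subr1Ml. Qed.

Lemma stable_range_oneC : stable_range_one R <-> left_stable_range_one R.
Proof.
split=> sr1 a b x.
- move=> xab1; have -> : b = 1 - x * a by rewrite -xab1 addrAC subrr add0r.
  have [y a_unit] := sr1 a (1 - a * x) x (subrKC _ _).
  by exists y; apply: unit_addr_subr1Mr.
- move=> axb1; have -> : b = 1 - a * x by rewrite -axb1 addrAC subrr add0r.
  have [y a_unit] := sr1 a (1 - x * a) x (subrKC _ _).
  by exists y; apply: unit_addr_subr1Ml.
Qed.

End StableRangeSymmetry.

Section UniqueGeneration.
Variable R : unitRingType.

Lemma left_stable_range_one_uniquely_generated :
  left_stable_range_one R -> left_uniquely_generated R.
Proof.
move=> sr1 a b Rab.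
have [s a_sb] : lprinc b a by apply/Rab; exists 1; rewrite mul1r.
have [t b_ta] : lprinc a b by apply/Rab; exists 1; rewrite mul1r.
have [y u_unit] := sr1 s (1 - t * s) t (subrKC _ _).
exists (s + y * (1 - t * s)); split=> //.
by rewrite mulrDl -mulrA mulrBl mul1r -mulrA -a_sb -b_ta subrr mulr0 addr0.
Qed.

Lemma uniquely_generated_left_stable_range_one :
  (forall b : R, exists c : R, same_set (lprinc b) (ann_l c)) ->
  left_uniquely_generated R -> left_stable_range_one R.
Proof.
move=> ann_princ ug a b x xab1.
have [c Rb_ann] := ann_princ b.
have bc0 : b * c = 0 by apply/Rb_ann; exists 1; rewrite mul1r.
have c_xac : c = x * (a * c) by rewrite mulrA -[LHS]mul1r -xab1 mulrDl bc0 addr0.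
have [u [u_unit ac_uc]] : exists u : R, u \is a GRing.unit /\ a * c = u * c.
  apply: ug => r; split=> -[s ->].
  - by exists (s * a); rewrite mulrA.
  - by exists (s * x); rewrite -mulrA -c_xac.
have [y a_uyb] : lprinc b (a - u) by apply/Rb_ann; rewrite /ann_l mulrBl ac_uc subrr.
by exists (- y); rewrite mulNr -a_uyb opprB subrKC.
Qed.

End UniqueGeneration.

Theorem theorem5 (R : unitRingType) :
  left_quasi_morphic R ->
  (left_uniquely_generated R <-> stable_range_one R).
Proof.
move=> [ann_princ _]; split=> [ug | /stable_range_oneC sr1].
- by apply/stable_range_oneC; apply: uniquely_generated_left_stable_range_one.
- exact: left_stable_range_one_uniquely_generated sr1.
Qed.
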